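(* Let $G$ be a finite graph, let $L=\{L_v\subset \mathbb{R}:v\in V(G)\}$ be an assignment of finite lists of real numbers to the vertices of $G$, and suppose that $f:V(G)\to \mathbb{Z}$ satisfies $f(v)<|L_v|$ for every $v\in V(G)$ and $\sum_{v\in V(G)} f(v)=|E(G)|-2$. If $G$ is not $L$-colorable, then for each color $c$, $$\sum_{\{u,v\}\subseteq V(G)} [x^{f+1_u+1_v}]\,P_G \cdot \chi_{L,c}(u)\chi_{L,c}(v) + \sum_{v\in V(G)} [x^{f+2\cdot 1_v}]\,P_G \cdot \chi_{L,c}(v)=0,$$ and for any distinct colors $c_1$ and $c_2$, $$\sum_{\{u,v\}\subseteq V(G)} [x^{f+1_u+1_v}]\,P_G \cdot (\chi_{L,c_1}(u)\chi_{L,c_2}(v)+\chi_{L,c_2}(u)\chi_{L,c_1}(v))+\sum_{v\in V(G)} [x^{f+2\cdot 1_v}]\,P_G \cdot \chi_{L,c_1}(v)\chi_{L,c_2}(v)=0,$$ where the sums over $\{u,v\}\subseteq V(G)$ range over unordered pairs of distinct vertices.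
   Context: An $L$-coloring of $G$ is a function $\varphi$ with $\varphi(v)\in L_v$ for all $v\in V(G)$ and $\varphi(u)\neq\varphi(v)$ for every edge $uv\in E(G)$; $G$ is $L$-colorable if an $L$-coloring exists. The graph polynomial $P_G$ is the polynomial in variables $x_v$ ($v\in V(G)$) defined by fixing an orientation $\vec G$ of $G$ and setting $P_G=\prod_{(u,v)\in E(\vec G)}(x_v-x_u)$; it is determined up to sign by $G$. For a function $g:V(G)\to\mathbb{Z}$ with nonnegative values, $x^g=\prod_{v\in V(G)}x_v^{g(v)}$, and $[x^g]\,q$ denotes the coefficient of the monomial $x^g$ in a polynomial $q$ (taken to be $0$ if $g$ has a negative value). For $z\in V(G)$, $1_z:V(G)\to\{0,1\}$ is the function with $1_z(z)=1$ and $1_z(u)=0$ for $u\neq z$. For a color $c$, the characteristic vector $\chi_{L,c}:V(G)\to\{0,1\}$ is defined by $\chi_{L,c}(v)=1$ if $c\in L_v$ and $\chi_{L,c}(v)=0$ otherwise. *)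

From HB Require Import structures.
From mathcomp Require Import all_boot all_order all_algebra.
From mathcomp Require Import finmap.
From mathcomp Require Import reals.
From mathcomp Require Import mpoly.
Set Implicit Arguments. Unset Strict Implicit. Unset Printing Implicit Defensive.
Import Order.TTheory GRing.Theory Num.Theory.
Local Open Scope ring_scope.

Definition simple_graph (n : nat) (e : rel 'I_n) : Prop :=
  ssrbool.symmetric e /\ ssrbool.irreflexive e.

Definition edges (n : nat) (e : rel 'I_n) : {set 'I_n * 'I_n} :=
  [set p : 'I_n * 'I_n | (p.1 < p.2)%N && e p.1 p.2].

(* Graph polynomial, for the orientation u -> v whenever u < v. *)
Definition graph_poly (n : nat) (e : rel 'I_n) : {mpoly int[n]} :=
  \prod_(p in edges e) ('X_p.2 - 'X_p.1).

(* [x^g] q, taken to be 0 if g has a negative value. *)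
Definition coef_at (n : nat) (q : {mpoly int[n]}) (g : 'I_n -> int) : int :=
  if [forall i, 0 <= g i] then q@_[multinom `|g i|%N | i < n] else 0.

Definition ind (n : nat) (z : 'I_n) : 'I_n -> int := fun u => (u == z)%:R.

Definition L_colorable (R : realType) (n : nat) (e : rel 'I_n)
    (L : 'I_n -> {fset R}) : Prop :=
  exists phi : 'I_n -> R,
    (forall v, phi v \in L v) /\ (forall u v, e u v -> phi u != phi v).

Definition chi (R : realType) (n : nat) (L : 'I_n -> {fset R}) (c : R) :
  'I_n -> int := fun v => (c \in L v)%:R.

From HB Require Import structures.
From mathcomp Require Import all_boot all_order all_algebra.
From mathcomp Require Import finmap.
From mathcomp Require Import reals.
From mathcomp Require Import mpoly.
From mathcomp Require Import ring lra zify.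
Import Order.TTheory GRing.Theory Num.Theory.
Local Open Scope ring_scope.
Set Implicit Arguments. Unset Strict Implicit. Unset Printing Implicit Defensive.

(* Let B_v be duplicate-free lists with f v < |B_v| and no proper coloring    *)
(* from them. The graph polynomial P vanishes on the grid of the B_v, so the    *)
(* coefficient form of the Combinatorial Nullstellensatz gives                  *)
(*   sum_m P_m prod_v h_(m_v - f_v)(B_v) = 0,                                   *)
(* with h_k the complete homogeneous symmetric polynomials (h_k = 0 for k < 0). *)
(* As P is homogeneous of degree |E| = sum f + 2, only the monomials            *)
(* f + 1_u + 1_v and f + 2 1_v contribute, leaving                              *)
(*   sum_(u<v) [x^(f+1_u+1_v)]P e_1(B_u) e_1(B_v)                               *)
(*     + sum_v [x^(f+2 1_v)]P h_2(B_v) = 0.                                     *)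
(* Replacing the color c (or c1 and c2) by a fresh value t (or l and m) in      *)
(* every list keeps the lists duplicate-free and non-colorable, so the identity *)
(* holds for all large t (or l, m). Its left-hand side is quadratic in these    *)
(* values, the claimed sums are its coefficient of t^2 (or of l m), and a       *)
(* second (or mixed) finite difference extracts that coefficient. An empty list *)
(* forces f v < 0, and then every coefficient in the claim vanishes.            *)

Section LagrangeMoments.
Variable F : fieldType.
Implicit Types (B : seq F) (b c : F) (p : {poly F}).

Definition lagrange_weight B b := (\prod_(b' <- B | b' != b) (b - b'))^-1.

(* moment B k is the complete homogeneous symmetric polynomial of degree *)
(* k + 1 - size B in B (zero in negative degree). *)
Definition moment B k := \sum_(b <- B) b ^+ k * lagrange_weight B b.

Let lagrange_numer B b : {poly F} := \prod_(b' <- B | b' != b) ('X - b'%:P).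

Let size_lagrange_numer B b : uniq B -> b \in B ->
  size (lagrange_numer B b) = size B.
Proof.
move=> uB bB; rewrite /lagrange_numer -big_filter size_prod_XsubC -rem_filter //.
by rewrite size_rem // prednK //; case: B bB {uB}.
Qed.

Let horner_lagrange_numer B b c : c \in B ->
  (lagrange_numer B b).[c] = if c == b then (lagrange_weight B b)^-1 else 0.
Proof.
move=> cB; rewrite /lagrange_numer horner_prod.
have [->|ncb] := eqVneq c b.
  by rewrite invrK; apply: eq_bigr => b' _; rewrite hornerXsubC.
apply/eqP; rewrite prodf_seq_eq0; apply/hasP; exists c => //.
by rewrite ncb hornerXsubC subrr eqxx.
Qed.

Lemma lagrange_weight_neq0 B b : uniq B -> lagrange_weight B b != 0.
Proof.
move=> uB; rewrite invr_eq0 prodf_seq_neq0; apply/allP => b' _.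
by apply/implyP => nb'b; rewrite subr_eq0 eq_sym.
Qed.

(* p is its Lagrange interpolant, a combination of the monic lagrange_numer B b *)
(* of degree size B - 1 with coefficients p.[b] * lagrange_weight B b. *)
Lemma sum_horner_lagrange_weight B p : uniq B -> (size p <= size B)%N ->
  \sum_(b <- B) p.[b] * lagrange_weight B b = p`_(size B).-1.
Proof.
move=> uB sp.
pose q := \sum_(b <- B) (p.[b] * lagrange_weight B b) *: lagrange_numer B b.
have size_q : (size q <= size B)%N.
  rewrite (leq_trans (size_sum _ _ _)) //; apply/bigmax_leqP_seq => b bB _.
  by rewrite (leq_trans (size_scale_leq _ _)) // size_lagrange_numer.
have q_eq_p : q = p.
  apply/eqP; rewrite -subr_eq0; apply/eqP/(roots_geq_poly_eq0 _ uB).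
    apply/allP => c cB; rewrite /root !hornerE horner_sum.
    rewrite (bigD1_seq c) //= big1_seq ?addr0 => [|b /andP[nbc _]]; last first.
      by rewrite hornerZ horner_lagrange_numer // eq_sym (negbTE nbc) mulr0.
    rewrite hornerZ horner_lagrange_numer // eqxx -mulrA mulfV ?mulr1 ?subrr //.
    exact: lagrange_weight_neq0.
  by rewrite (leq_trans (size_add _ _)) // size_opp geq_max size_q.
rewrite -[in RHS]q_eq_p coef_sum; apply: eq_big_seq => b bB; rewrite coefZ.
rewrite -(size_lagrange_numer uB bB) -lead_coefE.
by rewrite (monicP (monic_prod_XsubC _ _ _)) mulr1.
Qed.

Lemma moment_lt_size B k : uniq B -> (k < size B)%N ->
  moment B k = (k == (size B).-1)%:R.
Proof.
move=> uB kB; rewrite eq_sym -[RHS](coefXn F) -sum_horner_lagrange_weight //.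
  by apply: eq_bigr => b _; rewrite hornerXn.
by rewrite size_polyXn.
Qed.

Let g B : {poly F} := \prod_(b <- B) ('X - b%:P).

(* The factor 'X^2 keeps the three indices below nonnegative for every B. *)
Let coef_Xsqr_g B :
  [/\ ('X^2 * g B)`_(size B).+2 = 1,
      ('X^2 * g B)`_(size B).+1 = - \sum_(b <- B) b
    & ('X^2 * g B)`_(size B) *+ 2 = (\sum_(b <- B) b) ^+ 2 - \sum_(b <- B) b ^+ 2].
Proof.
elim: B => [|b B [top1 top2 top3]] /=.
  by rewrite /g !big_nil mulr1 !coefXn /= oppr0 mul0rn expr0n /= addr0.
have gS j : ('X^2 * g (b :: B))`_j.+1 = ('X^2 * g B)`_j - b * ('X^2 * g B)`_j.+1.
  by rewrite /g big_cons mulrCA mulrBl mul_polyC coefB coefXM coefZ.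
have top0 : ('X^2 * g B)`_(size B).+3 = 0.
  by rewrite coefXnM /= subSS subSS subn0 nth_default // size_prod_XsubC.
by rewrite !big_cons !gS top0 top1 top2 mulrnBl top3; split; ring.
Qed.

Let g_root B b : b \in B -> (g B).[b] = 0.
Proof. by move=> bB; apply/rootP; rewrite root_prod_XsubC. Qed.

Let coef_g B j : (g B)`_j = ('X^2 * g B)`_j.+2.
Proof. by rewrite coefXnM /= subSS subSS subn0. Qed.

Let coef_Xsqr_g_high B j : ((size B).+2 < j)%N -> ('X^2 * g B)`_j = 0.
Proof.
move=> Bj; rewrite coefXnM ifF; last by apply/negbTE; rewrite -leqNgt; lia.
by rewrite nth_default // size_prod_XsubC; lia.
Qed.

Let coef_Xg B j : ('X * g B)`_j = ('X^2 * g B)`_j.+1.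
Proof. by rewrite coefXM coefXnM; case: j => [|j] //=; rewrite subSS subSS subn0. Qed.

Lemma moment_size B : uniq B -> (0 < size B)%N ->
  moment B (size B) = \sum_(b <- B) b.
Proof.
move=> uB B_gt0; have [top1 top2 _] := coef_Xsqr_g B.
have -> : \sum_(b <- B) b = ('X^(size B) - g B)`_(size B).-1.
  by rewrite coefB coefXn ltn_eqF ?ltn_predL // sub0r coef_g prednK // top2 opprK.
rewrite -sum_horner_lagrange_weight //.
  by apply: eq_big_seq => b bB; rewrite !hornerE g_root // subr0.
apply/leq_sizeP => j; rewrite leq_eqVlt => /orP[/eqP<-|Nj].
  by rewrite coefB coefXn eqxx coef_g top1 subrr.
by rewrite coefB coefXn gtn_eqF // nth_default ?subrr // size_prod_XsubC.
Qed.

Lemma moment_size_succ B : uniq B -> (0 < size B)%N ->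
  moment B (size B).+1 *+ 2 = (\sum_(b <- B) b) ^+ 2 + \sum_(b <- B) b ^+ 2.
Proof.
move=> uB B_gt0; have [top1 top2 top3] := coef_Xsqr_g B.
set e1 := (\sum_(b <- B) b) in top2 top3 *.
pose p := 'X^((size B).+1) - 'X * g B - e1 *: g B.
have coef_p j : p`_j = ((j == (size B).+1)%:R - ('X^2 * g B)`_j.+1)
                      - e1 * ('X^2 * g B)`_j.+2.
  by rewrite !coefB coefXn coefZ coef_Xg coef_g.
have -> : moment B (size B).+1 = p`_(size B).-1.
  rewrite -sum_horner_lagrange_weight //.
    apply: eq_big_seq => b bB.
    by rewrite !hornerE g_root // !mulr0 !subr0.
  apply/leq_sizeP => j; rewrite leq_eqVlt => /orP[/eqP<-|].
    by rewrite coef_p top1 top2 ltn_eqF //=; ring.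
  rewrite leq_eqVlt => /orP[/eqP<-|Nj].
    by rewrite coef_p eqxx top1 coef_Xsqr_g_high ?mulr0 ?subrr ?subr0.
  by rewrite coef_p gtn_eqF // !coef_Xsqr_g_high ?mulr0 ?subr0 //; lia.
rewrite coef_p prednK // ltn_eqF; last by lia.
by rewrite !mulrnBl top3 top2 /=; ring.
Qed.

End LagrangeMoments.

Section SumTwoVectors.
Variable n : nat.
Implicit Types (k : 'I_n -> int) (a b u v w : 'I_n).

Let exists_pos_of_sum (P : pred 'I_n) k : (forall i, P i -> 0 <= k i) ->
  0 < \sum_(i | P i) k i -> exists2 w, P w & 0 < k w.
Proof.
move=> k_ge0; case: (pickP (fun w => P w && (0 < k w))) => [w /andP[]|k_le0].
  by exists w.
rewrite ltNge => /negP[]; apply: sumr_le0 => i Pi.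
by move: (k_le0 i); rewrite Pi /= => /negbT; rewrite -leNgt.
Qed.

Lemma sum2_shape k : (forall i, 0 <= k i) -> \sum_i k i = 2 ->
  (exists w, k =1 (fun i => ind w i *+ 2)) \/
  (exists a b, (a < b)%N /\ k =1 (fun i => ind a i + ind b i)).
Proof.
move=> k_ge0 k_sum.
have [w _ kw_gt0] : exists2 w, true & 0 < k w.
  by apply: exists_pos_of_sum => //; rewrite k_sum.
move: k_sum; rewrite (bigD1 w) //=.
have rest_ge0 : 0 <= \sum_(i | i != w) k i by apply: sumr_ge0.
set rest := \sum_(i | i != w) k i in rest_ge0 * => k_sum.
have rest0 (P : pred 'I_n) : \sum_(i | P i) k i = 0 -> forall i, P i -> k i = 0.
  by move=> sum0; apply: psumr_eq0P sum0 => j _.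
have [kw2|kw1] : k w = 2 \/ k w = 1 by lia.
  have rest_eq0 : rest = 0 by lia.
  left; exists w => i; rewrite /ind.
  have [->|iw] := eqVneq i w; first by rewrite kw2.
  by rewrite (rest0 _ rest_eq0 i iw).
have [w' w'w kw'_gt0] : exists2 w', w' != w & 0 < k w'.
  by apply: exists_pos_of_sum => [i _|]; rewrite ?k_ge0 // -/rest; lia.
move: k_sum; rewrite /rest (bigD1 w') //=.
have rest2_ge0 : 0 <= \sum_(i | (i != w) && (i != w')) k i by apply: sumr_ge0.
set rest2 := \sum_(i | _) k i in rest2_ge0 * => k_sum.
have kw'1 : k w' = 1 by lia.
have kE i : k i = ind w i + ind w' i.
  rewrite /ind; have [->|iw] := eqVneq i w; first by rewrite eq_sym (negbTE w'w); lia.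
  have [->|iw'] := eqVneq i w'; first by lia.
  have rest2_eq0 : rest2 = 0 by lia.
  by rewrite (rest0 _ rest2_eq0) ?iw ?iw'.
right; case: (ltngtP w w') => [ww'|w'w_lt|/val_inj ww']; last by rewrite ww' eqxx in w'w.
  by exists w, w'.
by exists w', w; split => // i; rewrite addrC.
Qed.

Variable R : comPzSemiRingType.

Let sum_eq_mul (F : 'I_n -> R) w : \sum_(v < n) (v == w)%:R * F v = F w.
Proof.
by rewrite (bigD1 w) //= eqxx mul1r big1 ?addr0 // => v /negbTE->; rewrite mul0r.
Qed.

Let sum_pair_eq_mul (F : 'I_n -> 'I_n -> R) a b : (a < b)%N ->
  \sum_(u < n) \sum_(v < n | (u < v)%N) ((u == a) && (v == b))%:R * F u v = F a b.
Proof.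
move=> ab; rewrite (bigD1 a) //= [X in _ + X]big1 => [|u /negbTE ua]; last first.
  by rewrite big1 // => v _; rewrite ua mul0r.
rewrite (bigD1 b) //= !eqxx mul1r big1 ?addr0 // => v /andP[_ /negbTE vb].
by rewrite vb andbF mul0r.
Qed.

Let ind_double_eq w v : [forall i, ind w i *+ 2 == ind v i *+ 2] = (v == w).
Proof.
apply/forallP/eqP => [/(_ v) /eqP|-> //]; rewrite /ind eqxx -val_eqE /= => vw.
by apply: val_inj => /=; lia.
Qed.

Let ind_double_pair_eq w u v : (u < v)%N ->
  [forall i, ind w i *+ 2 == ind u i + ind v i] = false.
Proof.
by move=> uv; apply/forallP => /(_ u) /eqP; rewrite /ind -!val_eqE /=; lia.
Qed.

Let ind_pair_double_eq a b v : (a < b)%N ->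
  [forall i, ind a i + ind b i == ind v i *+ 2] = false.
Proof.
by move=> ab; apply/forallP => /(_ a) /eqP; rewrite /ind -!val_eqE /=; lia.
Qed.

Let ind_pair_eq a b u v : (a < b)%N -> (u < v)%N ->
  [forall i, ind a i + ind b i == ind u i + ind v i] = (u == a) && (v == b).
Proof.
move=> ab uv; apply/forallP/andP => [H|[/eqP-> /eqP->] //].
by move: (eqP (H u)) (eqP (H v)); rewrite /ind -!val_eqE /=; split; apply/eqP; lia.
Qed.

Lemma prod_sum2 (s : 'I_n -> int -> R) k : \sum_i k i = 2 ->
  (forall v, k v < 0 -> s v (k v) = 0) -> (forall v, s v 0 = 1) ->
  \prod_(v < n) s v (k v) =
    \sum_(u < n) \sum_(v < n | (u < v)%N)
      [forall i, k i == ind u i + ind v i]%:R * (s u 1 * s v 1)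
    + \sum_(v < n) [forall i, k i == ind v i *+ 2]%:R * s v 2.
Proof.
move=> k_sum s_neg s0.
have [w kw_lt0|k_nneg] := pickP (fun w => k w < 0).
  have not_k_eq (g : 'I_n -> int) : 0 <= g w -> [forall i, k i == g i] = false.
    by move=> gw0; apply/forallP => /(_ w) /eqP kw; lia.
  rewrite (bigD1 w) //= s_neg // mul0r big1 => [|u _]; last first.
    by rewrite big1 // => v _; rewrite not_k_eq ?mul0r // /ind; lia.
  by rewrite add0r big1 // => v _; rewrite not_k_eq ?mul0r // /ind; lia.
have k_ge0 i : 0 <= k i by rewrite leNgt k_nneg.
case: (sum2_shape k_ge0 k_sum) => [[w kE]|[a [b [ab kE]]]].
  have k_eq g : [forall i, k i == g i] = [forall i, ind w i *+ 2 == g i].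
    by apply: eq_forallb => i; rewrite kE.
  rewrite (bigD1 w) //= big1 => [|v vw]; last by rewrite kE /ind (negbTE vw) s0.
  rewrite big1 => [|u _]; last first.
    by rewrite big1 // => v uv; rewrite k_eq ind_double_pair_eq ?mul0r.
  rewrite add0r (eq_bigr (fun v => (v == w)%:R * s v 2)) => [|v _]; last first.
    by rewrite k_eq ind_double_eq.
  by rewrite sum_eq_mul kE /ind eqxx mulr1.
have k_eq g : [forall i, k i == g i] = [forall i, ind a i + ind b i == g i].
  by apply: eq_forallb => i; rewrite kE.
have [ka kb] : k a = 1 /\ k b = 1 by rewrite !kE /ind -!val_eqE /=; split; lia.
have ba : b != a by rewrite -val_eqE /= gtn_eqF.
rewrite (bigD1 a) //= (bigD1 b) //= big1 => [|v /andP[va vb]]; last first.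
  by rewrite kE /ind (negbTE va) (negbTE vb) s0.
rewrite [X in _ + X]big1 => [|v _]; last by rewrite k_eq ind_pair_double_eq ?mul0r.
rewrite (eq_bigr (fun u => \sum_(v < n | (u < v)%N)
  ((u == a) && (v == b))%:R * (s u 1 * s v 1))) => [|u _]; last first.
  by apply: eq_bigr => v uv; rewrite k_eq ind_pair_eq.
by rewrite sum_pair_eq_mul // ka kb mulr1 addr0.
Qed.

End SumTwoVectors.

Section GridVanishing.
Variables (F : fieldType) (n : nat) (B : 'I_n -> seq F) (P : {mpoly int[n]}).
Hypothesis P_grid0 : forall a : 'I_n -> F, (forall v, a v \in B v) ->
  mmap intr a P = 0.

Let N := (\max_(v < n) size (B v))%N.

Let big_seq_ord v (G : F -> F) : \sum_(b <- B v) G b =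
  \sum_(j < N) (if (j < size (B v))%N then G (nth 0 (B v) j) else 0).
Proof.
rewrite (big_nth 0) big_mkord -big_mkcond /=.
by rewrite (big_ord_widen N (fun j => G (nth 0 (B v) j))) // leq_bigmax.
Qed.

(* Expanding the product of moments over the grid, the coefficients of P *)
(* recombine into the values of P at the grid points. *)
Lemma sum_coef_prod_moment_eq0 (d : 'I_n -> nat) :
  \sum_(m <- msupp P) (P@_m)%:~R * \prod_(v < n) moment (B v) (m v + d v) = 0.
Proof.
pose a (phi : {ffun 'I_n -> 'I_N}) v := nth 0 (B v) (phi v).
pose in_grid (phi : {ffun 'I_n -> 'I_N}) := [forall v, phi v < size (B v)]%N.
pose W phi := \prod_(v < n) (a phi v ^+ d v * lagrange_weight (B v) (a phi v)).
have prod_momentE m : \prod_(v < n) moment (B v) (m v + d v) =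
    \sum_phi (if in_grid phi then (\prod_(v < n) a phi v ^+ m v) * W phi else 0).
  rewrite /moment; under eq_bigr => v _ do rewrite big_seq_ord.
  rewrite bigA_distr_bigA; apply: eq_bigr => phi _.
  case: ifP => [/forallP phi_grid|/negbT]; last first.
    by rewrite negb_forall => /existsP[v /negbTE phiv]; rewrite (bigD1 v) //= phiv mul0r.
  rewrite /W -big_split; apply: eq_bigr => v _.
  by rewrite phi_grid exprD -mulrA.
under eq_bigr => m _ do rewrite prod_momentE mulr_sumr.
rewrite exchange_big /= big1 // => phi _.
case: (boolP (in_grid phi)) => phi_grid; last first.
  by rewrite big1 // => m _; rewrite mulr0.
under eq_bigr => m _ do rewrite mulrA.
have := P_grid0 (fun v => mem_nth 0 (forallP phi_grid v)).
by rewrite -mulr_suml /mmap /mmap1 => ->; rewrite mul0r.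
Qed.

End GridVanishing.

Section GraphPolynomial.
Variables (n : nat) (e : rel 'I_n).

Lemma graph_poly_homog : graph_poly e \is #|edges e|.-homog.
Proof.
rewrite /graph_poly -sum1_card.
apply: (big_ind2 (fun k (p : {mpoly int[n]}) => p \is k.-homog)).
- exact: dhomog1.
- by move=> ? ? ? ? hp hq; apply: dhomogM.
- by move=> uv _; rewrite rpredB // dhomogX; apply/eqP; apply: mdeg1.
Qed.

Lemma graph_poly_eval_neq0 (S : comNzRingType) (a : 'I_n -> S) :
  simple_graph e -> mmap intr a (graph_poly e) != 0 ->
  forall u v, e u v -> a u != a v.
Proof.
case=> e_sym e_irr P_neq0 u v euv; apply: contraNneq P_neq0 => auv.
wlog uv : u v euv auv / (u < v)%N => [wlog_uv|].
  have [|vu|/val_inj uv] := ltngtP u v; first exact: wlog_uv.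
    by apply: (wlog_uv v u); rewrite // e_sym.
  by rewrite uv e_irr in euv.
rewrite /graph_poly rmorph_prod (bigD1 (u, v)) /=; last by rewrite inE /= uv euv.
by rewrite rmorphB /= !mmapX !mmap1U auv subrr mul0r.
Qed.

End GraphPolynomial.

Section CoefAt.
Variables (n : nat) (R : pzRingType).
Implicit Types (Q : {mpoly int[n]}) (g : 'I_n -> int).

Lemma coef_atE Q g : (coef_at Q g)%:~R =
  \sum_(m <- msupp Q) (Q@_m)%:~R * [forall i, (m i)%:Z == g i]%:R :> R.
Proof.
rewrite /coef_at; case: ifP => [/forallP g_ge0|/negbT g_neg]; last first.
  rewrite big1 ?mulr0n // => m _; case: forallP => [mg|]; last by rewrite mulr0.
  by case/negP: g_neg; apply/forallP => i; rewrite -(eqP (mg i)).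
set m0 := [multinom `|g i|%N | i < n].
have mE (m : 'X_{1..n}) : [forall i, (m i)%:Z == g i] = (m == m0).
  apply/forallP/eqP => [mg|-> i]; last by rewrite mnmE gez0_abs.
  by apply/mnmP => i; rewrite mnmE -(eqP (mg i)) absz_nat.
under eq_bigr do rewrite mE.
case: (boolP (m0 \in msupp Q)) => [m0Q|m0_notQ].
  rewrite (bigD1_seq m0) ?msupp_uniq //= eqxx mulr1 big1_seq ?addr0 //.
  by move=> m /andP[/negbTE-> _]; rewrite mulr0.
rewrite memN_msupp_eq0 // big1_seq // => m /andP[_ mQ].
by case: eqP => [mm0|_]; [rewrite -mm0 mQ in m0_notQ | rewrite mulr0].
Qed.

Lemma coef_at_neg Q g w : g w < 0 -> coef_at Q g = 0.
Proof.
by move=> gw; rewrite /coef_at ifF //; apply/negbTE/forallP => /(_ w); rewrite leNgt gw.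
Qed.

End CoefAt.

Section PairSums.
Variable n : nat.

Lemma eq0_of_intr_pair_sums (R : numDomainType) (k2 X : 'I_n -> 'I_n -> int)
    (k1 Y : 'I_n -> int) :
  \sum_(u < n) \sum_(v < n | (u < v)%N) (k2 u v)%:~R * (X u v)%:~R
    + \sum_(v < n) (k1 v)%:~R * (Y v)%:~R = 0 :> R ->
  \sum_(u < n) \sum_(v < n | (u < v)%N) k2 u v * X u v + \sum_(v < n) k1 v * Y v = 0.
Proof.
move=> sumR_eq0; apply/eqP; rewrite -(intr_eq0 R) -[X in _ == X]sumR_eq0.
rewrite rmorphD !rmorph_sum; apply/eqP; congr (_ + _).
  by apply: eq_bigr => u _; rewrite rmorph_sum; apply: eq_bigr => v _; rewrite rmorphM.
by apply: eq_bigr => v _; rewrite rmorphM.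
Qed.

Lemma coef_pair_sums_eq0 (P : {mpoly int[n]}) (f : 'I_n -> int) (w : 'I_n)
    (X : 'I_n -> 'I_n -> int) (Y : 'I_n -> int) :
  f w < 0 -> (forall u v, (u == w) || (v == w) -> X u v = 0) -> Y w = 0 ->
  \sum_(u < n) \sum_(v < n | (u < v)%N)
     coef_at P (fun i => f i + ind u i + ind v i) * X u v
  + \sum_(v < n) coef_at P (fun i => f i + ind v i *+ 2) * Y v = 0.
Proof.
move=> fw X0 Yw0; rewrite !big1 ?addr0 // => [v _|u _].
  have [->|vw] := eqVneq v w; first by rewrite Yw0 mulr0.
  by rewrite (coef_at_neg _ (w := w)) ?mul0r // /ind eq_sym (negbTE vw) mul0rn addr0.
apply: big1 => v _; have [/X0->|] := boolP ((u == w) || (v == w)); first by rewrite mulr0.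
rewrite negb_or => /andP[uw vw]; rewrite (coef_at_neg _ (w := w)) ?mul0r //.
by rewrite /ind ![w == _]eq_sym (negbTE uw) (negbTE vw) !addr0.
Qed.

End PairSums.

Section ListIdentity.
Variables (F : fieldType) (n : nat) (e : rel 'I_n) (B : 'I_n -> seq F).
Variable f : 'I_n -> int.
Hypothesis e_simple : simple_graph e.
Hypothesis B_uniq : forall v, uniq (B v).
Hypothesis B_neq0 : forall v, (0 < size (B v))%N.
Hypothesis f_lt : forall v, f v < (size (B v))%:Z.
Hypothesis f_sum : \sum_(v < n) f v = (#|edges e|)%:Z - 2.
Hypothesis B_nocol : ~ exists a : 'I_n -> F,
  (forall v, a v \in B v) /\ (forall u v, e u v -> a u != a v).

Local Notation P := (graph_poly e).

(* With this shift the v-th moment has degree m v - f v as a symmetric *)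
(* polynomial, and these degrees sum to 2 on the support of P.          *)
Let d v := absz ((size (B v))%:Z - 1 - f v)%R.

Lemma prod_moment_shift (m : 'X_{1..n}) : mdeg m = #|edges e| ->
  \prod_(v < n) moment (B v) (m v + d v) =
    \sum_(u < n) \sum_(v < n | (u < v)%N)
      [forall i, (m i)%:Z == f i + ind u i + ind v i]%:R
        * ((\sum_(b <- B u) b) * \sum_(b <- B v) b)
    + \sum_(v < n) [forall i, (m i)%:Z == f i + ind v i *+ 2]%:R
        * moment (B v) (size (B v)).+1.
Proof.
move=> m_deg; pose s v (j : int) := moment (B v) (absz (j + (size (B v))%:Z - 1)%R).
rewrite (eq_bigr (fun v => s v ((m v)%:Z - f v))) => [|v _]; last first.
  by rewrite /s /d; congr moment; have := f_lt v; lia.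
have sE v (j : nat) : s v j = moment (B v) (j + (size (B v)).-1).
  by rewrite /s; congr moment; have := B_neq0 v; lia.
rewrite prod_sum2 => [| | |v]; last by rewrite sE add0n moment_lt_size ?eqxx ?ltn_predL.
- congr (_ + _); [apply: eq_bigr => u _; apply: eq_bigr => v _|apply: eq_bigr => v _].
    rewrite !sE !add1n !prednK // !moment_size //.
    by congr ((nat_of_bool _)%:R * _); apply: eq_forallb => i; rewrite subr_eq addrC addrA.
  rewrite sE -addnA !add1n prednK //.
  by congr ((nat_of_bool _)%:R * _); apply: eq_forallb => i; rewrite subr_eq addrC.
- rewrite sumrB f_sum -m_deg mdegE (big_morph Posz PoszD (erefl _)); ring.
- move=> v mv_lt; rewrite /s moment_lt_size //; last by have := f_lt v; lia.
  by case: eqP => //; have := f_lt v; lia.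
Qed.

Lemma list_coef_identity :
  \sum_(u < n) \sum_(v < n | (u < v)%N)
     (coef_at P (fun w => f w + ind u w + ind v w))%:~R
       * ((\sum_(b <- B u) b) * \sum_(b <- B v) b)
  + \sum_(v < n) (coef_at P (fun w => f w + ind v w *+ 2))%:~R
       * moment (B v) (size (B v)).+1 = 0.
Proof.
have P_grid0 a : (forall v, a v \in B v) -> mmap intr a P = 0.
  move=> a_grid; apply/eqP/contraT => Pa; case: B_nocol.
  by exists a; split => //; apply: graph_poly_eval_neq0.
have coef_atM g (X : F) : (coef_at P g)%:~R * X =
    \sum_(m <- msupp P) (P@_m)%:~R * ([forall i, (m i)%:Z == g i]%:R * X).
  by rewrite coef_atE mulr_suml; apply: eq_bigr => m _; rewrite mulrA.
have P_deg := dhomogP _ _ _ (graph_poly_homog e).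
rewrite -[RHS](sum_coef_prod_moment_eq0 P_grid0 d).
under [RHS]eq_big_seq => m mP do rewrite prod_moment_shift ?P_deg // mulrDr.
rewrite [RHS]big_split /=; congr (_ + _).
  under [RHS]eq_bigr => m _ do rewrite mulr_sumr.
  rewrite [RHS]exchange_big; apply: eq_bigr => u _.
  under [RHS]eq_bigr => m _ do rewrite mulr_sumr.
  by rewrite [RHS]exchange_big; apply: eq_bigr => v _; rewrite coef_atM.
under [RHS]eq_bigr => m _ do rewrite mulr_sumr.
by rewrite [RHS]exchange_big; apply: eq_bigr => v _; rewrite coef_atM.
Qed.

End ListIdentity.

Section PairForm.
Variables (R : comPzRingType) (n : nat).
Variables (k2 : 'I_n -> 'I_n -> R) (k1 : 'I_n -> R).

(* Twice the left-hand side of list_coef_identity, for lists with sums S and *)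
(* sums of squares Q, since 2 h_2(B) = e_1(B)^2 + p_2(B).                    *)
Definition pair_form (S Q : 'I_n -> R) :=
  \sum_(u < n) \sum_(v < n | (u < v)%N) k2 u v * (S u * S v) *+ 2
  + \sum_(v < n) k1 v * (S v ^+ 2 + Q v).

Lemma eq_pair_form (S1 Q1 S2 Q2 : 'I_n -> R) : S1 =1 S2 -> Q1 =1 Q2 ->
  pair_form S1 Q1 = pair_form S2 Q2.
Proof.
move=> S12 Q12; rewrite /pair_form; congr (_ + _).
  by apply: eq_bigr => u _; apply: eq_bigr => v _; rewrite !S12.
by apply: eq_bigr => v _; rewrite S12 Q12.
Qed.

Let sumrBBD (I : Type) (r : seq I) (P : pred I) (F1 F2 F3 F4 : I -> R) :
  \sum_(i <- r | P i) F1 i - \sum_(i <- r | P i) F2 i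
  - \sum_(i <- r | P i) F3 i + \sum_(i <- r | P i) F4 i
  = \sum_(i <- r | P i) (F1 i - F2 i - F3 i + F4 i).
Proof. by rewrite -!sumrB -big_split. Qed.

Let pair_formBBD (S1 Q1 S2 Q2 S3 Q3 S4 Q4 : 'I_n -> R) :
  pair_form S1 Q1 - pair_form S2 Q2 - pair_form S3 Q3 + pair_form S4 Q4 =
  \sum_(u < n) \sum_(v < n | (u < v)%N) k2 u v
     * (S1 u * S1 v - S2 u * S2 v - S3 u * S3 v + S4 u * S4 v) *+ 2
  + \sum_(v < n) k1 v * ((S1 v ^+ 2 + Q1 v) - (S2 v ^+ 2 + Q2 v)
                        - (S3 v ^+ 2 + Q3 v) + (S4 v ^+ 2 + Q4 v)).
Proof.
have regroup (x1 y1 x2 y2 x3 y3 x4 y4 : R) :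
  (x1 + y1) - (x2 + y2) - (x3 + y3) + (x4 + y4)
  = (x1 - x2 - x3 + x4) + (y1 - y2 - y3 + y4) by ring.
rewrite /pair_form regroup !sumrBBD; congr (_ + _).
  by apply: eq_bigr => u _; rewrite sumrBBD; apply: eq_bigr => v _; ring.
by apply: eq_bigr => v _; ring.
Qed.

Lemma pair_form_second_difference (a a2 b : 'I_n -> R) (x : R) :
  let G t := pair_form (fun v => a v + b v * t) (fun v => a2 v + b v * t ^+ 2) in
  G (x + 2%:R) - G (x + 1) - G (x + 1) + G x =
    (\sum_(u < n) \sum_(v < n | (u < v)%N) k2 u v * (b u * b v)) *+ 4
    + (\sum_(v < n) k1 v * (b v ^+ 2 + b v)) *+ 2.
Proof.
rewrite /= pair_formBBD -!sumrMnl; congr (_ + _).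
  by apply: eq_bigr => u _; rewrite -sumrMnl; apply: eq_bigr => v _; ring.
by apply: eq_bigr => v _; ring.
Qed.

Lemma pair_form_mixed_difference (a a2 b1 b2 : 'I_n -> R) (x y : R) :
  let G l m := pair_form (fun v => a v + b1 v * l + b2 v * m)
                         (fun v => a2 v + b1 v * l ^+ 2 + b2 v * m ^+ 2) in
  G (x + 1) (y + 1) - G (x + 1) y - G x (y + 1) + G x y =
    (\sum_(u < n) \sum_(v < n | (u < v)%N) k2 u v * (b1 u * b2 v + b2 u * b1 v)
     + \sum_(v < n) k1 v * (b1 v * b2 v)) *+ 2.
Proof.
rewrite /= pair_formBBD mulrnDl -!sumrMnl; congr (_ + _).
  by apply: eq_bigr => u _; rewrite -sumrMnl; apply: eq_bigr => v _; ring.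
by apply: eq_bigr => v _; ring.
Qed.

End PairForm.

Section Recolor.
Variable T : eqType.

Definition recolor (c t x : T) := if x == c then t else x.

Lemma recolor_inj (s : seq T) c t : t \notin s -> {in s &, injective (recolor c t)}.
Proof.
move=> ts x y xs ys; rewrite /recolor.
case: eqP => [xc|_]; case: eqP => [yc|_] //; first by rewrite xc yc.
  by move=> ty; rewrite ty ys in ts.
by move=> xt; rewrite -xt xs in ts.
Qed.

Lemma big_recolor (R : pzSemiRingType) (s : seq T) c t (G : T -> R) : uniq s ->
  \sum_(x <- s) G (recolor c t x) = \sum_(x <- s | x != c) G x + (c \in s)%:R * G t.
Proof.
move=> s_uniq; rewrite (bigID (pred1 c)) /= addrC; congr (_ + _).
  by apply: eq_bigr => x /negbTE xc; rewrite /recolor xc.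
rewrite (eq_bigr (fun=> G t)) => [|x /eqP ->]; last by rewrite /recolor eqxx.
by rewrite big_const_seq iter_addr_0 mulr_natl -(count_uniq_mem c s_uniq).
Qed.

End Recolor.

Section RecoloredLists.
Variables (R : realType) (n : nat) (e : rel 'I_n) (L : 'I_n -> {fset R}).
Variable f : 'I_n -> int.
Hypothesis e_simple : simple_graph e.
Hypothesis f_lt : forall v, f v < (#|` L v|)%:Z.
Hypothesis f_sum : \sum_(v < n) f v = (#|edges e|)%:Z - 2.
Hypothesis L_nocol : ~ L_colorable e L.
Hypothesis L_neq0 : forall v, (0 < #|` L v|)%N.

Local Notation C2 u v :=
  ((coef_at (graph_poly e) (fun w => f w + ind u w + ind v w))%:~R : R).
Local Notation C1 v := ((coef_at (graph_poly e) (fun w => f w + ind v w *+ 2))%:~R : R).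
Local Notation pform := (pair_form (fun u v => C2 u v) (fun v => C1 v)).

Lemma pair_form_image_eq0 (sigma : R -> R) : (forall v, {in L v &, injective sigma}) ->
  pform (fun v => \sum_(x <- L v) sigma x) (fun v => \sum_(x <- L v) sigma x ^+ 2) = 0.
Proof.
move=> sigma_inj; pose B v := [seq sigma x | x <- L v].
have B_uniq v : uniq (B v) by rewrite map_inj_in_uniq ?fset_uniq //; apply: sigma_inj.
have B_size v : size (B v) = #|` L v| by rewrite size_map.
have B_nocol : ~ exists a, (forall v, a v \in B v) /\ (forall u v, e u v -> a u != a v).
  case=> a [a_B a_proper]; apply: L_nocol.
  pose phi v := nth 0 (L v : seq R) (index (a v) (B v)).
  have index_lt v : (index (a v) (B v) < #|` L v|)%N by rewrite -B_size index_mem.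
  have sigma_phi v : sigma (phi v) = a v by rewrite -(nth_map _ 0) ?nth_index.
  exists phi; split => [v|u v euv]; first exact: mem_nth.
  by apply: contra_neq (a_proper u v euv) => phi_uv; rewrite -!sigma_phi phi_uv.
have B_neq0 v : (0 < size (B v))%N by rewrite B_size.
have f_lt_B v : f v < (size (B v))%:Z by rewrite B_size.
rewrite -[RHS](mul0rn _ 2).
rewrite -[in RHS](list_coef_identity e_simple B_uniq B_neq0 f_lt_B f_sum B_nocol).
rewrite mulrnDl -!sumrMnl /pair_form; congr (_ + _).
  by apply: eq_bigr => u _; rewrite -sumrMnl; apply: eq_bigr => v _; rewrite !big_map.
apply: eq_bigr => v _.
by rewrite -mulrnAr moment_size_succ // !big_map.
Qed.

Let M := \sum_(v < n) \sum_(x <- L v) `|x|.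

Let M_ge0 : 0 <= M.
Proof. by apply: sumr_ge0 => v _; apply: sumr_ge0 => x _. Qed.

Let notin_L_gt v t : M < t -> t \notin L v.
Proof.
move=> Mt; apply: contraTN Mt => tL; rewrite -leNgt (le_trans (ler_norm t)) //.
rewrite /M (bigD1 v) //= (bigD1_seq t) ?fset_uniq //= -addrA lerDl.
by apply: addr_ge0; apply: sumr_ge0 => w _ //; apply: sumr_ge0.
Qed.

Local Notation chiR c v := ((chi L c v)%:~R : R).

Let chiRE c v : chiR c v = (c \in L v)%:R.
Proof. by rewrite /chi rmorph_nat. Qed.

Let chiR_sqr c v : chiR c v ^+ 2 = chiR c v.
Proof. by rewrite chiRE; case: (c \in L v); rewrite ?expr1n ?expr0n. Qed.

Lemma single_color_identity c :
  \sum_(u < n) \sum_(v < n | (u < v)%N)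
     coef_at (graph_poly e) (fun w => f w + ind u w + ind v w) * (chi L c u * chi L c v)
  + \sum_(v < n) coef_at (graph_poly e) (fun w => f w + ind v w *+ 2) * chi L c v = 0.
Proof.
apply: (eq0_of_intr_pair_sums (R := R)).
under eq_bigr => u _ do under eq_bigr => v _ do rewrite rmorphM.
pose a v := \sum_(x <- L v | x != c) x.
pose a2 v := \sum_(x <- L v | x != c) x ^+ 2.
have G0 t : M < t ->
    pform (fun v => a v + chiR c v * t) (fun v => a2 v + chiR c v * t ^+ 2) = 0.
  move=> Mt; rewrite -(@pair_form_image_eq0 (recolor c t)) => [|v]; last first.
    exact/recolor_inj/notin_L_gt.
  apply: eq_pair_form => v; rewrite chiRE.
    by rewrite (@big_recolor _ _ _ _ _ (fun x => x)) ?fset_uniq.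
  by rewrite (@big_recolor _ _ _ _ _ (fun x => x ^+ 2)) ?fset_uniq.
have := pair_form_second_difference (fun u v => C2 u v) (fun v => C1 v) a a2
  (fun v => chiR c v) (M + 1).
rewrite /= !G0 ?subrr ?add0r; [|lra..].
have -> : \sum_(v < n) C1 v * (chiR c v ^+ 2 + chiR c v) =
    (\sum_(v < n) C1 v * chiR c v) *+ 2.
  by rewrite -sumrMnl; apply: eq_bigr => v _; rewrite chiR_sqr -mulr2n mulrnAr.
by rewrite -mulrnA -mulrnDl => /esym/eqP; rewrite mulrn_eq0 => /eqP.
Qed.

Lemma two_color_identity c1 c2 : c1 != c2 ->
  \sum_(u < n) \sum_(v < n | (u < v)%N)
     coef_at (graph_poly e) (fun w => f w + ind u w + ind v w)
       * (chi L c1 u * chi L c2 v + chi L c2 u * chi L c1 v)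
  + \sum_(v < n) coef_at (graph_poly e) (fun w => f w + ind v w *+ 2)
       * (chi L c1 v * chi L c2 v) = 0.
Proof.
move=> c12; apply: (eq0_of_intr_pair_sums (R := R)).
under eq_bigr => u _ do under eq_bigr => v _ do rewrite rmorphD !rmorphM.
under [X in _ + X]eq_bigr => v _ do rewrite rmorphM.
pose L' v := [seq x <- L v : seq R | x != c2].
pose a v := \sum_(x <- L' v | x != c1) x.
pose a2 v := \sum_(x <- L' v | x != c1) x ^+ 2.
have big_recolor2 v l m (G : R -> R) : m != c1 ->
    \sum_(x <- L v) G (recolor c1 l (recolor c2 m x)) =
    \sum_(x <- L' v | x != c1) G x + chiR c1 v * G l + chiR c2 v * G m.
  move=> mc1; rewrite (@big_recolor _ _ _ _ _ (fun x => G (recolor c1 l x))) ?fset_uniq //.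
  rewrite {2}/recolor (negbTE mc1) -big_filter big_recolor ?filter_uniq ?fset_uniq //.
  by rewrite mem_filter c12 !chiRE.
have G0 l m : M + `|c1| < l -> l < m ->
    pform (fun v => a v + chiR c1 v * l + chiR c2 v * m)
          (fun v => a2 v + chiR c1 v * l ^+ 2 + chiR c2 v * m ^+ 2) = 0.
  move=> c1l lm; have M0 := M_ge0; have c1_ge0 := normr_ge0 c1.
  have c1_le := ler_norm c1.
  have mc1 : m != c1 by rewrite gt_eqF //; lra.
  rewrite -(@pair_form_image_eq0 (recolor c1 l \o recolor c2 m)) => [|v]; last first.
    apply: (@in_inj_comp _ _ _ _ _ (mem (m :: L v))).
    - by apply: recolor_inj; rewrite inE negb_or lt_eqF ?notin_L_gt //; lra.
    - by apply/recolor_inj/notin_L_gt; lra.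
    - move=> x xL; rewrite /recolor; case: eqP => _; first exact: mem_head.
      exact: mem_behead.
  apply: eq_pair_form => v /=.
    by rewrite (big_recolor2 _ _ _ (fun x => x)).
  by rewrite (big_recolor2 _ _ _ (fun x => x ^+ 2)).
have := pair_form_mixed_difference (fun u v => C2 u v) (fun v => C1 v) a a2
  (fun v => chiR c1 v) (fun v => chiR c2 v) (M + `|c1| + 1) (M + `|c1| + 3%:R).
have M0 := M_ge0; have c1_ge0 := normr_ge0 c1.
by rewrite /= !G0; lra.
Qed.

End RecoloredLists.

Unset Implicit Arguments.

Theorem theorem17 (R : realType) (n : nat) (e : rel 'I_n)
  (L : 'I_n -> {fset R}) (f : 'I_n -> int) :
  simple_graph e ->
  (forall v, f v < (#|` L v|)%:Z) ->
  \sum_(v < n) f v = (#|edges e|)%:Z - 2 ->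
  ~ L_colorable e L ->
  (forall c : R,
     \sum_(u < n) \sum_(v < n | (u < v)%N)
        coef_at (graph_poly e) (fun w => f w + ind u w + ind v w) * (chi L c u * chi L c v)
     + \sum_(v < n) coef_at (graph_poly e) (fun w => f w + ind v w *+ 2) * chi L c v = 0)
  /\
  (forall c1 c2 : R, c1 != c2 ->
     \sum_(u < n) \sum_(v < n | (u < v)%N)
        coef_at (graph_poly e) (fun w => f w + ind u w + ind v w)
          * (chi L c1 u * chi L c2 v + chi L c2 u * chi L c1 v)
     + \sum_(v < n) coef_at (graph_poly e) (fun w => f w + ind v w *+ 2)
          * (chi L c1 v * chi L c2 v) = 0).
Proof.
move=> e_simple f_lt f_sum L_nocol.
have [w /eqP Lw0|L_neq0] := pickP (fun w => #|` L w| == 0%N); last first.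
  have L_gt0 v : (0 < #|` L v|)%N by rewrite lt0n L_neq0.
  by split=> [c|c1 c2]; [apply: single_color_identity | apply: two_color_identity].
have fw : f w < 0 by have := f_lt w; rewrite Lw0.
have chi_w c : chi L c w = 0 by rewrite /chi (cardfs0_eq Lw0) inE.
by split=> [c|c1 c2 _]; apply: (coef_pair_sums_eq0 _ fw) => [u v /orP[]/eqP->|];
  rewrite ?chi_w ?(mulr0, mul0r, addr0).
Qed.
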